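(* Let $G$ be finite and $z\in\mathbb C\setminus\{0\}$. Then the eigenspace $\{f\in D_\infty:\mathcal Tf=zf\}$ is contained in $D_1$ and, under the identification $D_1\cong\mathrm{Map}(E)$, equals $\mathrm{Eq}(S,z\,\mathrm{Id})$. If $z\notin\{-1,0,1\}$, the twisted gradient $d_z$ gives an isomorphism from $\mathrm{Eq}(\Sigma,R_z)=\mathrm{Eq}(\Delta,L_z)$ onto this eigenspace.
   Context: $G$ is a finite connected graph with vertex set $V$ (no loops, no multiple edges, every vertex of degree $\ge2$); $\deg v=1+q(v)$. $E$ oriented edges, $\iota,\tau$ initial/terminal vertex maps, $\bar e$ opposite; turn $e\rightsquigarrow e'$ iff $\tau(e)=\iota(e')$, $e'\ne\bar e$. $P$ = infinite paths $(e_1,e_2,\dots)$ with $e_i\rightsquigarrow e_{i+1}$; $(\mathcal Tf)(e_1,\dots)=\sum_{e_0\rightsquigarrow e_1}f(e_0,e_1,\dots)$. $D_m$ = functions on $P$ depending only on $e_1,\dots,e_m$; $D_\infty=\bigcup_mD_m$; $D_1\cong\mathrm{Map}(E)$. $(Sg)(e)=\sum_{e'\rightsquigarrow e}g(e')$; $(\Sigma f)(v)=\sum_{w\text{ adj. }v}f(w)$; $(\Delta f)(v)=\frac{1}{1+q(v)}\sum_{w\text{ adj. }v}f(w)$; $R_z$, $L_z$ = multiplication by $z+q(v)z^{-1}$ resp. $\frac{z+z^{-1}q(v)}{1+q(v)}$; $d_zf=f\circ\iota-z^{-1}f\circ\tau$; $\mathrm{Eq}(A,B)=\{f:Af=Bf\}$.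 *)

From HB Require Import structures.
From mathcomp Require Import all_boot all_algebra.
From mathcomp Require Import complex reals Rstruct.
Set Implicit Arguments. Unset Strict Implicit. Unset Printing Implicit Defensive.
Import GRing.Theory.
Local Open Scope ring_scope.

Definition C : fieldType := complex Rdefinitions.R.

Definition simple_graph (V : finType) (adj : rel V) : Prop :=
  symmetric adj /\ irreflexive adj.

Definition graph_connected (V : finType) (adj : rel V) : Prop :=
  forall x y : V, connect adj x y.

Definition deg (V : finType) (adj : rel V) (v : V) : nat := #|[set w | adj v w]|.

Definition qC (V : finType) (adj : rel V) (v : V) : C := (deg adj v)%:R - 1.

Definition oedge (V : finType) (adj : rel V) : finType :=
  {p : V * V | adj p.1 p.2}.

Definition iota_ (V : finType) (adj : rel V) (e : oedge adj) : V := (val e).1.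
Definition tau_ (V : finType) (adj : rel V) (e : oedge adj) : V := (val e).2.

(* turn e ~> e' iff tau e = iota e' and e' <> bar e; given tau e = iota e',
   e' = bar e iff tau e' = iota e. *)
Definition turn (V : finType) (adj : rel V) (e e' : oedge adj) : bool :=
  (tau_ e == iota_ e') && ~~ ((iota_ e' == tau_ e) && (tau_ e' == iota_ e)).

(* Infinite non-backtracking paths (e_1, e_2, ...), indexed from 0. *)
Record ipath (V : finType) (adj : rel V) := IPath {
  pe : nat -> oedge adj;
  pe_turn : forall i, turn (pe i) (pe i.+1) }.

Lemma pcons_turn (V : finType) (adj : rel V) (e0 : oedge adj) (p : ipath adj)
  (H : turn e0 (pe p 0)) :
  forall i, turn ((fun j => match j with 0 => e0 | j'.+1 => pe p j' end) i)
                 ((fun j => match j with 0 => e0 | j'.+1 => pe p j' end) i.+1).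
Proof. by case=> [|i] //=; apply: pe_turn. Qed.

Definition pcons (V : finType) (adj : rel V) (e0 : oedge adj) (p : ipath adj)
  (H : turn e0 (pe p 0)) : ipath adj := IPath (pcons_turn H).

Definition transfer (V : finType) (adj : rel V) (f : ipath adj -> C)
  (p : ipath adj) : C :=
  \sum_(x : {e0 : oedge adj | turn e0 (pe p 0)}) f (pcons (valP x)).

Definition D_m (V : finType) (adj : rel V) (m : nat) (f : ipath adj -> C) : Prop :=
  forall p p' : ipath adj, (forall i, (i < m)%N -> pe p i = pe p' i) -> f p = f p'.

Definition D_inf (V : finType) (adj : rel V) (f : ipath adj -> C) : Prop :=
  exists m, D_m m f.

(* Identification Map(E) -> D_1 : g |-> ((e_1, ...) |-> g e_1). *)
Definition lift1 (V : finType) (adj : rel V) (g : oedge adj -> C) : ipath adj -> C :=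
  fun p => g (pe p 0).

Definition Sop (V : finType) (adj : rel V) (g : oedge adj -> C) (e : oedge adj) : C :=
  \sum_(e' : oedge adj | turn e' e) g e'.

Definition Sigma (V : finType) (adj : rel V) (f : V -> C) (v : V) : C :=
  \sum_(w : V | adj v w) f w.

Definition Delta (V : finType) (adj : rel V) (f : V -> C) (v : V) : C :=
  (1 + qC adj v)^-1 * \sum_(w : V | adj v w) f w.

Definition Rz (V : finType) (adj : rel V) (z : C) (f : V -> C) (v : V) : C :=
  (z + qC adj v * z^-1) * f v.

Definition Lz (V : finType) (adj : rel V) (z : C) (f : V -> C) (v : V) : C :=
  ((z + z^-1 * qC adj v) / (1 + qC adj v)) * f v.

Definition dz (V : finType) (adj : rel V) (z : C) (f : V -> C) (e : oedge adj) : C :=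
  f (iota_ e) - z^-1 * f (tau_ e).

Definition Eqsp (X Y : Type) (A B : (X -> C) -> (Y -> C)) (f : X -> C) : Prop :=
  forall y, A f y = B f y.

Definition eigT (V : finType) (adj : rel V) (z : C) (f : ipath adj -> C) : Prop :=
  D_inf f /\ forall p, transfer f p = z * f p.

(* An eigenfunction f in D_(m+2) equals z^-1 T f, and T f only depends on the
   first m+1 edges of its argument, so f descends to D_1, where T acts as S.
   For f on vertices, the turn sum of d_z f at e = (u, v) is
   Sigma f u - f v - q(u) z^-1 f u, which equals z d_z f e exactly when
   Sigma f u = (z + q(u) z^-1) f u.  Conversely, for g in Eq(S, z Id) the
   inflow A(u) = sum_(w ~ u) g(w, u) satisfies A(u) = z g(u, v) + g(v, u) along
   every edge; solving these two equations gives g = d_z (z A / (z^2 - 1)), and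
   A lies in Eq(Sigma, R_z).  If d_z f = 0 then f(v) = z f(u) and f(u) = z f(v)
   along an edge, so (z^2 - 1) f = 0. *)

From HB Require Import structures.
From mathcomp Require Import all_boot all_algebra.
From mathcomp Require Import complex reals Rstruct.
From mathcomp Require Import ring.
Import GRing.Theory Num.Theory.
Local Open Scope ring_scope.

Set Implicit Arguments. Unset Strict Implicit. Unset Printing Implicit Defensive.

Section Paths.
Variables (V : finType) (adj : rel V).

Definition pcons_dflt (e0 : oedge adj) (p : ipath adj) : ipath adj :=
  if insub e0 : option {e0 | turn e0 (pe p 0)} is Some x then pcons (valP x) else p.

Lemma pe_pcons_dflt e0 p : turn e0 (pe p 0) ->
  forall i, pe (pcons_dflt e0 p) i = if i is j.+1 then pe p j else e0.
Proof. by move=> H [|i]; rewrite /pcons_dflt insubT. Qed.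

Lemma transferE (f : ipath adj -> C) p :
  transfer f p = \sum_(e0 | turn e0 (pe p 0)) f (pcons_dflt e0 p).
Proof.
rewrite (big_sub [pred e0 | turn e0 (pe p 0)]) /transfer.
by apply: eq_bigr => x _; rewrite /pcons_dflt valK.
Qed.

Lemma lift1_D1 (g : oedge adj -> C) : D_m 1 (lift1 g).
Proof. by move=> p p' Hpp'; rewrite /lift1 Hpp'. Qed.

Lemma transfer_lift1 (g : oedge adj -> C) p : transfer (lift1 g) p = Sop g (pe p 0).
Proof. by rewrite transferE; apply: eq_bigr => e0 He0; rewrite /lift1 pe_pcons_dflt. Qed.

Lemma eigT_eq (z : C) (F G : ipath adj -> C) : F =1 G -> eigT z F -> eigT z G.
Proof.
move=> eqFG [[m HF] TF]; split.
  by exists m => p p' Hpp'; rewrite -!eqFG; apply: HF.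
by move=> p; rewrite -eqFG -TF; apply: eq_bigr => x _; rewrite eqFG.
Qed.

Section Descent.
Variables (z : C) (f : ipath adj -> C).
Hypotheses (Hz : z != 0) (Tf : forall p, transfer f p = z * f p).

Lemma eigen_D_m_pred m : D_m m.+2 f -> D_m m.+1 f.
Proof.
move=> Hm p p' Hpp'.
have fE q : f q = z^-1 * transfer f q by rewrite Tf mulKf.
rewrite fE (fE p') !transferE -(Hpp' 0%N erefl); congr (_ * _).
apply: eq_bigr => e0 He0; apply: Hm => i Hi.
have He0' : turn e0 (pe p' 0) by rewrite -(Hpp' 0%N erefl).
by rewrite !pe_pcons_dflt //; case: i Hi => // j /Hpp'.
Qed.

Lemma eigen_D1 m : D_m m f -> D_m 1 f.
Proof.
elim: m => [|[|m] IHm] Hm //; first by move=> p p' _; apply: Hm.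
exact: IHm (eigen_D_m_pred Hm).
Qed.

End Descent.

Lemma eigT_D1 (z : C) (f : ipath adj -> C) : z != 0 -> eigT z f -> D_m 1 f.
Proof. by move=> Hz [[m Hm] Tf]; apply: eigen_D1 Hz Tf m Hm. Qed.

Hypothesis Hdeg : forall v : V, (2 <= deg adj v)%N.

Lemma exists_turn (e : oedge adj) : exists e', turn e e'.
Proof.
have : (1 < #|[set w | adj (tau_ e) w]|)%N by apply: Hdeg.
rewrite (cardD1 (iota_ e)) => deg_gt1.
have /card_gt0P[w] : (0 < #|[predD1 [set w | adj (tau_ e) w] & iota_ e]|)%N.
  by move: deg_gt1; case: (_ \in _) => //= /ltnW.
rewrite !inE => /andP[w_iota adj_w].
exists (exist _ (tau_ e, w) adj_w).
by rewrite /turn /iota_ /tau_ /= eqxx (negbTE w_iota) andbF.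
Qed.

Definition next_edge (e : oedge adj) : oedge adj := odflt e [pick e' | turn e e'].

Lemma turn_next_edge e : turn e (next_edge e).
Proof.
rewrite /next_edge; case: pickP => //= noturn.
by have [e' He'] := exists_turn e; rewrite noturn in He'.
Qed.

Definition ipath_from (e : oedge adj) : ipath adj :=
  @IPath V adj (fun i => iter i next_edge e) (fun i => turn_next_edge _).

Lemma eigT_lift1P (z : C) (g : oedge adj -> C) :
  eigT z (lift1 g) <-> Eqsp (@Sop V adj) (fun h e => z * h e) g.
Proof.
split=> [[_ Tg] e | Sg]; first by have := Tg (ipath_from e); rewrite transfer_lift1.
by split=> [|p]; [exists 1%N; apply: lift1_D1 | rewrite transfer_lift1 Sg].
Qed.

Lemma eigT_lift1_D1 (z : C) (F : ipath adj -> C) : z != 0 -> eigT z F ->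
  F =1 lift1 (fun e => F (ipath_from e)).
Proof. by move=> Hz /(eigT_D1 Hz) F1 p; apply: F1 => -[]. Qed.

End Paths.

Section Vertices.
Variables (V : finType) (adj : rel V).
Hypothesis adj_sym : symmetric adj.
Hypothesis Hdeg : forall v : V, (2 <= deg adj v)%N.

Definition edge_of u v (Huv : adj u v) : oedge adj := exist _ (u, v) Huv.

Lemma sum_turn_into (R : nmodType) (F : V -> V -> R) (e : oedge adj) :
  \sum_(e' | turn e' e) F (iota_ e') (tau_ e') =
  \sum_(w | adj w (iota_ e) && (w != tau_ e)) F w (iota_ e).
Proof.
pose into_e (p : V * V) := (p.2 == iota_ e) && ~~ ((iota_ e == p.2) && (tau_ e == p.1)).
transitivity (\sum_(p in [pred p : V * V | adj p.1 p.2] | into_e p) F p.1 p.2).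
  exact/esym/(big_sub_cond [pred p : V * V | adj p.1 p.2] into_e (fun p => F p.1 p.2)).
rewrite -(pair_big_dep xpredT (fun w y => adj w y && into_e (w, y))) /=.
rewrite [RHS]big_mkcond; apply: eq_bigr => w _.
rewrite big_mkcond (bigD1 (iota_ e)) //= big1 ?addr0 => [|y /negbTE y_e].
  by rewrite /into_e /= !eqxx /= eq_sym.
by rewrite /into_e /= y_e andbF.
Qed.

Lemma sum_adj_split (R : nmodType) (F : V -> R) u v : adj u v ->
  \sum_(w | adj u w) F w = F v + \sum_(w | adj w u && (w != v)) F w.
Proof.
move=> Huv; rewrite (bigD1 v) //=; congr (_ + _).
by apply: eq_bigl => w; rewrite adj_sym andbC.
Qed.

Lemma add1_qC u : 1 + qC adj u = (deg adj u)%:R.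
Proof. by rewrite /qC addrC subrK. Qed.

Lemma add1_qC_neq0 u : 1 + qC adj u != 0.
Proof.
(* [C] is only a fieldType; characteristic 0 is read off the numeric structure of [complex R]. *)
have deg_neq0 : ((deg adj u)%:R : complex Rdefinitions.R) != 0.
  by rewrite pnatr_eq0 -lt0n (leq_trans _ (Hdeg u)).
by rewrite add1_qC; exact: deg_neq0.
Qed.

Lemma sum_adj_const u (c : C) : \sum_(w | adj u w) c = c * (1 + qC adj u).
Proof.
rewrite sumr_const add1_qC mulr_natr; congr (_ *+ _).
by apply: eq_card => w; rewrite inE.
Qed.

Lemma sum_other_adj_const u v (c : C) : adj u v ->
  \sum_(w | adj w u && (w != v)) c = qC adj u * c.
Proof.
move=> Huv; apply: (@addrI _ c).
by rewrite -(sum_adj_split (fun=> c) Huv) sum_adj_const; ring.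
Qed.

Variable z : C.
Hypothesis Hz : z != 0.

Lemma Sigma_Rz_Delta_Lz (f : V -> C) :
  Eqsp (@Sigma V adj) (Rz adj z) f <-> Eqsp (@Delta V adj) (Lz adj z) f.
Proof.
split=> Hf u; have := Hf u; have := add1_qC_neq0 u; rewrite /Delta /Lz /Sigma /Rz.
  by move=> q1 ->; field; rewrite q1 Hz.
by move=> q1 E; rewrite -[LHS](mulVKf q1) E; field; rewrite q1 Hz.
Qed.

Lemma Sop_dz (f : V -> C) :
  Eqsp (@Sigma V adj) (Rz adj z) f -> Eqsp (@Sop V adj) (fun h e => z * h e) (dz z f).
Proof.
move=> Hf e; have Huv := valP e; have := Hf (iota_ e).
rewrite /Sop /Sigma /Rz /dz (sum_adj_split _ Huv) => Sigma_f.
rewrite (sum_turn_into (fun w u => f w - z^-1 * f u)) sumrB sum_other_adj_const //.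
rewrite -[X in X - _](addKr (f (tau_ e))) Sigma_f; field; exact: Hz.
Qed.

Hypothesis Hz2 : z ^+ 2 != 1.

Lemma dz_eq0 (h : V -> C) : (forall e, @dz V adj z h e = 0) -> forall v, h v = 0.
Proof.
move=> dh0 v; have /card_gt0P[w] := ltnW (Hdeg v); rewrite inE => Hvw.
have Hwv : adj w v by rewrite adj_sym.
have step x y (Hxy : adj x y) : h y = z * h x.
  by have := dh0 (edge_of Hxy); rewrite /dz /= => /eqP; rewrite subr_eq0 => /eqP ->; field.
have : (z ^+ 2 - 1) * h v = 0.
  by rewrite mulrBl mul1r expr2 -mulrA -(step _ _ Hvw) -(step _ _ Hwv) subrr.
by move/eqP; rewrite mulf_eq0 subr_eq0 (negbTE Hz2) => /eqP.
Qed.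

Lemma dz_inj (f1 f2 : V -> C) : (forall e, @dz V adj z f1 e = @dz V adj z f2 e) -> f1 =1 f2.
Proof.
move=> df v; apply/eqP; rewrite -subr_eq0; apply/eqP.
apply: (dz_eq0 (h := fun v => f1 v - f2 v)) => e.
by transitivity (dz z f1 e - dz z f2 e); [rewrite /dz; ring | rewrite df subrr].
Qed.

Section Inverse.
Variable g : oedge adj -> C.
Hypothesis Sg : Eqsp (@Sop V adj) (fun h e => z * h e) g.

Definition edge_val u v : C :=
  if insub (u, v) : option (oedge adj) is Some e then g e else 0.

Lemma edge_valE e : edge_val (iota_ e) (tau_ e) = g e.
Proof. by rewrite /edge_val /iota_ /tau_ -surjective_pairing valK. Qed.

Definition inflow u : C := \sum_(w | adj u w) edge_val w u.

Lemma inflow_edge u v : adj u v -> inflow u = z * edge_val u v + edge_val v u.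
Proof.
move=> Huv; have := Sg (edge_of Huv); rewrite /Sop.
under eq_bigr => e' _ do rewrite -edge_valE.
rewrite sum_turn_into -(edge_valE (edge_of Huv)) /= => <-.
by rewrite /inflow (sum_adj_split _ Huv) addrC.
Qed.

Lemma Sigma_inflow : Eqsp (@Sigma V adj) (Rz adj z) inflow.
Proof.
move=> u; rewrite /Sigma /Rz.
have adj_u v : adj u v -> adj v u by rewrite adj_sym.
under eq_bigr => v Huv do rewrite (inflow_edge (adj_u v Huv)).
rewrite big_split /= -mulr_sumr -/(inflow u).
have -> : \sum_(v | adj u v) edge_val u v = z^-1 * (qC adj u * inflow u).
  apply: (mulfI Hz); rewrite mulVKf // mulr_sumr.
  under eq_bigr => v Huv do rewrite -[z * _](addrK (edge_val v u)) -(inflow_edge Huv).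
  by rewrite sumrB sum_adj_const -/(inflow u); ring.
by field.
Qed.

Definition dz_inv u : C := z / (z ^+ 2 - 1) * inflow u.

Lemma Sigma_dz_inv : Eqsp (@Sigma V adj) (Rz adj z) dz_inv.
Proof.
move=> u; rewrite /Sigma /Rz -mulr_sumr.
by have := Sigma_inflow u; rewrite /Sigma /Rz /dz_inv => ->; ring.
Qed.

Lemma dz_dz_inv e : dz z dz_inv e = g e.
Proof.
have Huv : adj (iota_ e) (tau_ e) := valP e.
have Hvu : adj (tau_ e) (iota_ e) by rewrite adj_sym.
have z21 : z ^+ 2 - 1 != 0 by rewrite subr_eq0.
rewrite /dz /dz_inv -edge_valE (inflow_edge Huv) (inflow_edge Hvu).
by field; rewrite z21 Hz.
Qed.

End Inverse.

Lemma eigT_dz_surj (F : ipath adj -> C) : eigT z F ->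
  exists2 f : V -> C, Eqsp (@Sigma V adj) (Rz adj z) f & forall p, F p = lift1 (dz z f) p.
Proof.
move=> eigF; have F1 := eigT_lift1_D1 Hdeg Hz eigF.
set g := fun e => F (ipath_from Hdeg e) in F1.
have Sg : Eqsp (@Sop V adj) (fun h e => z * h e) g.
  by apply/(eigT_lift1P Hdeg); apply: eigT_eq F1 eigF.
exists (dz_inv g); first exact: Sigma_dz_inv.
by move=> p; rewrite F1 /lift1 dz_dz_inv.
Qed.

End Vertices.

Unset Implicit Arguments. Set Strict Implicit.

Theorem mainTheorem11 (V : finType) (adj : rel V)
  (Hsimple : simple_graph adj) (Hconn : graph_connected adj)
  (Hdeg : forall v : V, (2 <= deg adj v)%N)
  (z : C) (Hz0 : z != 0) :
  (forall f : ipath adj -> C, eigT z f -> D_m 1 f) /\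
  (forall g : oedge adj -> C,
      eigT z (lift1 g) <-> Eqsp (@Sop V adj) (fun h e => z * h e) g) /\
  (z != 1 -> z != -1 ->
     (forall f : V -> C,
        Eqsp (@Sigma V adj) (Rz adj z) f <-> Eqsp (@Delta V adj) (Lz adj z) f) /\
     (forall f : V -> C, Eqsp (@Sigma V adj) (Rz adj z) f -> eigT z (lift1 (@dz V adj z f))) /\
     (forall f1 f2 : V -> C,
        Eqsp (@Sigma V adj) (Rz adj z) f1 -> Eqsp (@Sigma V adj) (Rz adj z) f2 ->
        (forall e, @dz V adj z f1 e = @dz V adj z f2 e) -> forall v, f1 v = f2 v) /\
     (forall F : ipath adj -> C, eigT z F ->
        exists2 f : V -> C, Eqsp (@Sigma V adj) (Rz adj z) f &
          forall p, F p = lift1 (@dz V adj z f) p)).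
Proof.
have [adj_sym _] := Hsimple.
split=> [f|]; first exact: eigT_D1.
split=> [g|z_neq1 z_neqN1]; first exact: eigT_lift1P.
have Hz2 : z ^+ 2 != 1 by rewrite sqrf_eq1 negb_or z_neq1 z_neqN1.
split=> [f|]; first exact: Sigma_Rz_Delta_Lz.
split=> [f Sf|]; first exact/(eigT_lift1P Hdeg)/Sop_dz.
split=> [f1 f2 _ _|]; first exact: dz_inj.
exact: eigT_dz_surj.
Qed.
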